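(* Let $n\ge 2$ and let $\mathcal{C}\subseteq\{0,1\}^{n\times n}$ be a code. Then $\mathcal{C}$ is a $(1,1)$-criss-cross deletion correcting code if and only if it is a $(1,1)$-criss-cross insertion correcting code.
   Context: For a binary array $\mathbf{X}$, $\mathbb{D}_{t_r,t_c}(\mathbf{X})$ denotes the set of all arrays obtained from $\mathbf{X}$ by deleting any $t_r$ rows and any $t_c$ columns, and $\mathbb{I}_{t_r,t_c}(\mathbf{X})$ the set of all binary arrays obtained from $\mathbf{X}$ by inserting $t_r$ rows and $t_c$ columns (with arbitrary binary content, at arbitrary positions). A code $\mathcal{C}\subseteq\{0,1\}^{n\times n}$ is a $(t_r,t_c)$-criss-cross deletion correcting code if it can correct any deletion of $t_r$ rows and $t_c$ columns, i.e. $\mathbb{D}_{t_r,t_c}(\mathbf{X})\cap\mathbb{D}_{t_r,t_c}(\mathbf{Y})=\emptyset$ for all distinct $\mathbf{X},\mathbf{Y}\in\mathcal{C}$; a $(t_r,t_c)$-criss-cross insertion correcting code is defined analogously with $\mathbb{I}_{t_r,t_c}$. *)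

From mathcomp Require Import all_boot all_algebra.
Set Implicit Arguments. Unset Strict Implicit. Unset Printing Implicit Defensive.

Definition barray (m k : nat) := 'M[bool]_(m, k).

Definition del11 (m k : nat) (X : barray m.+1 k.+1) (i : 'I_m.+1) (j : 'I_k.+1)
  : barray m k := (\matrix_(r < m, c < k) X (lift i r) (lift j c))%R.

Definition D11 (m k : nat) (X : barray m.+1 k.+1) : {set barray m k} :=
  [set del11 X i j | i : 'I_m.+1, j : 'I_k.+1].

(* I_{1,1}(X) : all binary arrays obtained by inserting one row and one column
   (arbitrary contents, arbitrary positions); equivalently, all Y of size
   (m+1) x (k+1) from which X is obtained by deleting a row and a column. *)
Definition I11 (m k : nat) (X : barray m k) : {set barray m.+1 k.+1} :=
  [set Y : barray m.+1 k.+1 | [exists i, exists j, del11 Y i j == X]].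

Definition deletion_correcting11 (n' : nat) (C : {set barray n'.+1 n'.+1}) :=
  forall X Y, X \in C -> Y \in C -> X != Y -> D11 X :&: D11 Y = set0.

Definition insertion_correcting11 (n' : nat) (C : {set barray n'.+1 n'.+1}) :=
  forall X Y, X \in C -> Y \in C -> X != Y -> I11 X :&: I11 Y = set0.

From mathcomp Require Import all_boot all_algebra.
From mathcomp Require Import zify.

Set Implicit Arguments.
Unset Strict Implicit.
Unset Printing Implicit Defensive.

(* X and Y share a (1,1)-deletion iff they share a (1,1)-insertion, and rows
   and columns can be handled separately.  For positions i, i' of an
   (m+1)-sequence and a, c of an (m+2)-sequence with lift a i = c and
   lift c i' = a, the maps lift a \o lift i and lift c \o lift i' coincide,
   both enumerating the complement of {a, c}.  Hence a common deletion at
   (i, i') extends to a common superarray holding X at a and Y at c, and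
   conversely deleting a and c from a common superarray leaves two arrays
   with a common further deletion. *)

Section LiftExchange.

Variable m : nat.

Lemma lift_lift_swap (a c : 'I_m.+2) (i i' : 'I_m.+1) :
  lift a i = c -> lift c i' = a -> lift a \o lift i =1 lift c \o lift i'.
Proof.
move=> /(congr1 val) /= ac /(congr1 val) /= ca t; apply: val_inj.
by move: ac ca; rewrite /= /bump; lia.
Qed.

Lemma exists_lift_swap (i i' : 'I_m.+1) :
  exists a c : 'I_m.+2, lift a i = c /\ lift c i' = a.
Proof.
wlog le_ii' : i i' / (i <= i')%N.
  move=> hwlog; case: (leqP i i') => [/hwlog // | /ltnW /hwlog [a [c []]]].
  by exists c, a.
exists (Ordinal (ltn_ord i' : i'.+1 < m.+2)), (widen_ord (leqnSn _) i).
by split; apply: val_inj; rewrite /= /bump; lia.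
Qed.

Lemma exists_lift_lift_eq (a c : 'I_m.+2) :
  exists i i' : 'I_m.+1, lift a \o lift i =1 lift c \o lift i'.
Proof.
have [<- | neq_ac] := eqVneq a c; first by exists ord0, ord0.
have [i ac _] := unlift_some neq_ac.
rewrite eq_sym in neq_ac; have [i' ca _] := unlift_some neq_ac.
by exists i, i'; apply: lift_lift_swap.
Qed.

Lemma lift_swap_preimage (a c : 'I_m.+2) (i i' r r' : 'I_m.+1) :
  lift a i = c -> lift c i' = a -> lift a r = lift c r' ->
  exists t, r = lift i t /\ r' = lift i' t.
Proof.
move=> ac ca eq_r.
have neq_ir : i != r.
  by apply: contraTneq (neq_lift c r') => eq_ir; rewrite -eq_r -eq_ir ac negbK.
have [t eq_rt _] := unlift_some neq_ir.
exists t; split=> //; apply: (@lift_inj _ c).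
by rewrite -eq_r eq_rt; exact: lift_lift_swap ac ca t.
Qed.

End LiftExchange.

Section Superarray.

Variables m k : nat.
Variables (X Y : barray m.+1 k.+1) (a c : 'I_m.+2) (b d : 'I_k.+2).

(* Off row a and column b the entries come from X, the others from Y, except
   the cells (a, d) and (c, b) which neither array determines. *)
Definition superarray : barray m.+2 k.+2 :=
  (\matrix_(u, v)
    match unlift a u, unlift b v with
    | Some r, Some s => X r s
    | _, _ => if (unlift c u, unlift d v) is (Some r, Some s) then Y r s
              else false
    end)%R.

Lemma del11_superarray_l : del11 superarray a b = X.
Proof. by apply/matrixP => r s; rewrite !mxE !liftK. Qed.

Lemma del11_superarray_r (i i' : 'I_m.+1) (j j' : 'I_k.+1) :
  lift a i = c -> lift c i' = a -> lift b j = d -> lift d j' = b ->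
  del11 X i j = del11 Y i' j' -> del11 superarray c d = Y.
Proof.
move=> ac ca bd db /matrixP eqXY; apply/matrixP => r s; rewrite !mxE !liftK.
case: unliftP => [r1 eq_r1 | //]; case: unliftP => [s1 eq_s1 | //].
have [t [-> ->]] := lift_swap_preimage ac ca (esym eq_r1).
have [u [-> ->]] := lift_swap_preimage bd db (esym eq_s1).
by have := eqXY t u; rewrite !mxE.
Qed.

End Superarray.

Section CommonDeletionInsertion.

Variables (m k : nat) (X Y : barray m.+1 k.+1).

Lemma I11_meet_of_D11_meet :
  D11 X :&: D11 Y != set0 -> I11 X :&: I11 Y != set0.
Proof.
case/set0Pn => Z; rewrite inE => /andP [/imset2P [i j _ _ ->]].
case/imset2P => i' j' _ _ eqXY.
have [a [c [ac ca]]] := exists_lift_swap i i'.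
have [b [d [bd db]]] := exists_lift_swap j j'.
apply/set0Pn; exists (superarray X Y a c b d); rewrite !inE.
apply/andP; split; apply/existsP.
- by exists a; apply/existsP; exists b; rewrite del11_superarray_l.
- exists c; apply/existsP; exists d.
  by rewrite (del11_superarray_r ac ca bd db eqXY).
Qed.

Lemma D11_meet_of_I11_meet :
  I11 X :&: I11 Y != set0 -> D11 X :&: D11 Y != set0.
Proof.
case/set0Pn => W; rewrite !inE => /andP [/existsP [a /existsP [b /eqP <-]]].
case/existsP => c /existsP [d /eqP <-].
have [i [i' eq_i]] := exists_lift_lift_eq a c.
have [j [j' eq_j]] := exists_lift_lift_eq b d.
apply/set0Pn; exists (del11 (del11 W a b) i j); rewrite inE.
apply/andP; split; apply/imset2P; first by exists i j.
exists i' j' => //; apply/matrixP => r s.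
by rewrite !mxE; have := eq_i r; have := eq_j s; rewrite /= => -> ->.
Qed.

Lemma D11_meet0_I11_meet0 :
  (D11 X :&: D11 Y == set0) = (I11 X :&: I11 Y == set0).
Proof.
apply/idP/idP; apply: contraLR.
- exact: D11_meet_of_I11_meet.
- exact: I11_meet_of_D11_meet.
Qed.

End CommonDeletionInsertion.

Theorem theorem1 (n' : nat) (C : {set barray n'.+1 n'.+1}) :
  (2 <= n'.+1)%N ->
  (deletion_correcting11 C <-> insertion_correcting11 C).
Proof.
move=> _; split=> correct X Y XC YC neqXY; apply/eqP.
- by rewrite -D11_meet0_I11_meet0; apply/eqP; exact: correct.
- by rewrite D11_meet0_I11_meet0; apply/eqP; exact: correct.
Qed.
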